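(* Let $X$ be a Tychonoff space. The following are equivalent: (1) $C_m(X)$ is $\sigma$-compact; (2) $C_m(X)$ is strictly H-bounded; (3) $C_m(X)$ is H-bounded; (4) $C_m(X)$ is strictly M-bounded; (5) $C_m(X)$ is M-bounded; (6) $C_u(X)$ is M-bounded; (7) $X$ is finite; (8) $C_p(X)$ is $\sigma$-compact.
   Context: $C(X)$ is the set of continuous real-valued functions on $X$, a topological group under pointwise addition with identity the zero function. $C_p(X)$: pointwise convergence topology. $C_u(X)$: uniform convergence topology (basic neighborhoods $\{g:|g(x)-f(x)|<\varepsilon\ \forall x\in X\}$, $\varepsilon>0$). $C_m(X)$: $m$-topology (basic neighborhoods $\{g:|g(x)-f(x)|<\varepsilon(x)\ \forall x\}$, $\varepsilon\in C(X)$ strictly positive). For a topological group $G$ with identity $e$: M-bounded means for every sequence $(U_n)$ of neighborhoods of $e$ there are finite $A_n\subset G$ with $G=\bigcup_nA_nU_n$; H-bounded means there are finite $A_n$ with each $x\in G$ in all but finitely many $A_nU_n$. In the game where in round $n$ ONE picks a neighborhood $U_n$ of $e$ and TWO a finite $A_n\subset G$, $G$ is strictly M-bounded (resp. strictly H-bounded) if TWO has a strategy guaranteeing $G=\bigcup_nA_nU_n$ (resp. each $x\in G$ lies in all but finitely many $A_nU_n$). *)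

From Stdlib Require Import Reals Lra List.
Open Scope R_scope.
Set Implicit Arguments.

Definition is_topology {X : Type} (tau : (X -> Prop) -> Prop) : Prop :=
  tau (fun _ => True) /\
  (forall U V, tau U -> tau V -> tau (fun x => U x /\ V x)) /\
  (forall (F : (X -> Prop) -> Prop),
      (forall U, F U -> tau U) -> tau (fun x => exists U, F U /\ U x)).

Definition closed_set {X : Type} (tau : (X -> Prop) -> Prop) (F : X -> Prop) : Prop :=
  tau (fun x => ~ F x).

Definition continuous_R {X : Type} (tau : (X -> Prop) -> Prop) (f : X -> R) : Prop :=
  forall x eps, 0 < eps ->
    exists V, tau V /\ V x /\ forall y, V y -> Rabs (f y - f x) < eps.

Definition T1 {X : Type} (tau : (X -> Prop) -> Prop) : Prop :=
  forall x y : X, x <> y -> exists U, tau U /\ U x /\ ~ U y.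

Definition completely_regular {X : Type} (tau : (X -> Prop) -> Prop) : Prop :=
  forall (F : X -> Prop) (x : X), closed_set tau F -> ~ F x ->
    exists f : X -> R, continuous_R tau f /\ f x = 0 /\ (forall y, F y -> f y = 1).

Definition tychonoff {X : Type} (tau : (X -> Prop) -> Prop) : Prop :=
  T1 tau /\ completely_regular tau.

Definition finite_type (X : Type) : Prop := exists l : list X, forall x, In x l.

Definition compact_subset {T : Type} (tau : (T -> Prop) -> Prop) (K : T -> Prop) : Prop :=
  forall (C : (T -> Prop) -> Prop),
    (forall U, C U -> tau U) ->
    (forall x, K x -> exists U, C U /\ U x) ->
    exists l : list (T -> Prop),
      (forall U, In U l -> C U) /\ (forall x, K x -> exists U, In U l /\ U x).

Definition sigma_compact {T : Type} (tau : (T -> Prop) -> Prop) : Prop :=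
  exists K : nat -> (T -> Prop),
    (forall n, compact_subset tau (K n)) /\ (forall x, exists n, K n x).

(** Topology generated by a neighbourhood base [B f N] ("N is a basic nbhd of f"). *)
Definition gen_top {T : Type} (B : T -> (T -> Prop) -> Prop) (U : T -> Prop) : Prop :=
  forall f, U f -> exists N, B f N /\ forall g, N g -> U g.

Definition nbhd {T : Type} (tau : (T -> Prop) -> Prop) (e : T) (V : T -> Prop) : Prop :=
  exists U, tau U /\ U e /\ forall g, U g -> V g.

Definition translate_set {T : Type} (add : T -> T -> T) (A : list T) (U : T -> Prop)
  (x : T) : Prop :=
  exists a u, In a A /\ U u /\ x = add a u.

Definition M_bounded {T : Type} (add : T -> T -> T) (e : T)
  (tau : (T -> Prop) -> Prop) : Prop :=
  forall U : nat -> (T -> Prop), (forall n, nbhd tau e (U n)) ->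
    exists A : nat -> list T, forall x, exists n, translate_set add (A n) (U n) x.

Definition H_bounded {T : Type} (add : T -> T -> T) (e : T)
  (tau : (T -> Prop) -> Prop) : Prop :=
  forall U : nat -> (T -> Prop), (forall n, nbhd tau e (U n)) ->
    exists A : nat -> list T, forall x, exists N, forall n, (N <= n)%nat ->
      translate_set add (A n) (U n) x.

(** The moves of ONE up to round n (rounds numbered from 0). *)
Definition history {T : Type} (U : nat -> (T -> Prop)) (n : nat) : list (T -> Prop) :=
  map U (seq 0 (S n)).

(** A strategy of TWO maps the history of ONE's moves to a finite set. *)
Definition strictly_M_bounded {T : Type} (add : T -> T -> T) (e : T)
  (tau : (T -> Prop) -> Prop) : Prop :=
  exists sigma : list (T -> Prop) -> list T,
    forall U : nat -> (T -> Prop), (forall n, nbhd tau e (U n)) ->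
      forall x, exists n, translate_set add (sigma (history U n)) (U n) x.

Definition strictly_H_bounded {T : Type} (add : T -> T -> T) (e : T)
  (tau : (T -> Prop) -> Prop) : Prop :=
  exists sigma : list (T -> Prop) -> list T,
    forall U : nat -> (T -> Prop), (forall n, nbhd tau e (U n)) ->
      forall x, exists N, forall n, (N <= n)%nat ->
        translate_set add (sigma (history U n)) (U n) x.

Definition CX {X : Type} (tau : (X -> Prop) -> Prop) : Type :=
  { f : X -> R | continuous_R tau f }.

Definition cval {X : Type} {tau : (X -> Prop) -> Prop} (f : CX tau) : X -> R :=
  proj1_sig f.

Lemma continuous_R_add {X : Type} (tau : (X -> Prop) -> Prop) (f g : X -> R) :
  is_topology tau -> continuous_R tau f -> continuous_R tau g ->
  continuous_R tau (fun x => f x + g x).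
Proof.
  intros [_ [Hint _]] Hf Hg x eps Heps.
  destruct (Hf x (eps / 2)) as [V [HV [HVx HVf]]]; [lra|].
  destruct (Hg x (eps / 2)) as [W [HW [HWx HWg]]]; [lra|].
  exists (fun y => V y /\ W y); split; [apply Hint; auto|split; [auto|]].
  intros y [Hy1 Hy2]. specialize (HVf y Hy1). specialize (HWg y Hy2).
  replace (f y + g y - (f x + g x)) with ((f y - f x) + (g y - g x)) by ring.
  eapply Rle_lt_trans; [apply Rabs_triang|]. lra.
Qed.

Lemma continuous_R_const {X : Type} (tau : (X -> Prop) -> Prop) (c : R) :
  is_topology tau -> continuous_R tau (fun _ => c).
Proof.
  intros [Hfull _] x eps Heps. exists (fun _ => True). repeat split; auto.
  intros y _. unfold Rminus. rewrite Rplus_opp_r, Rabs_R0. exact Heps.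
Qed.

Definition cadd {X : Type} {tau : (X -> Prop) -> Prop} (Ht : is_topology tau)
  (f g : CX tau) : CX tau :=
  exist _ (fun x => cval f x + cval g x)
    (continuous_R_add Ht (proj2_sig f) (proj2_sig g)).

Definition czero {X : Type} {tau : (X -> Prop) -> Prop} (Ht : is_topology tau) : CX tau :=
  exist _ (fun _ => 0) (continuous_R_const 0 Ht).

Definition Cp_top {X : Type} (tau : (X -> Prop) -> Prop) : (CX tau -> Prop) -> Prop :=
  gen_top (fun f N => exists (F : list X) (eps : R), 0 < eps /\
    forall g, N g <-> (forall x, In x F -> Rabs (cval g x - cval f x) < eps)).

Definition Cu_top {X : Type} (tau : (X -> Prop) -> Prop) : (CX tau -> Prop) -> Prop :=
  gen_top (fun f N => exists eps : R, 0 < eps /\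
    forall g, N g <-> (forall x, Rabs (cval g x - cval f x) < eps)).

Definition Cm_top {X : Type} (tau : (X -> Prop) -> Prop) : (CX tau -> Prop) -> Prop :=
  gen_top (fun f N => exists eps : CX tau, (forall x, 0 < cval eps x) /\
    forall g, N g <-> (forall x, Rabs (cval g x - cval f x) < cval eps x)).

(* On a finite Tychonoff space every function is continuous and C_m(X) is R^X with its
   product topology: boxes are compact by bisection, so C_m(X) is sigma-compact, and TWO wins
   the H-game by answering round n with a fine net of the box of radius n + 1.
   On an infinite X, either X is discrete, and a function growing fast along an injective
   sequence x_n escapes, at x_n, the n-th finite translate of any covering of C_u(X) and the
   n-th compact set of C_p(X); or some x0 is not isolated, and a supremum of Urysohn bumps of
   heights 1/(n+1) placed near x0 oscillates too fast for the n-th set.  The remaining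
   implications hold because the m-topology is finer than the uniform and pointwise ones. *)

From Stdlib Require Import Reals Lra Lia List ClassicalEpsilon FunctionalExtensionality
  PropExtensionality ProofIrrelevance Classical.
Open Scope R_scope.

Lemma list_upper_bound {A : Type} (l : list A) (h : A -> R) :
  exists M, forall a, In a l -> h a <= M.
Proof.
  induction l as [|b l [M HM]]; [exists 0; intros a []|].
  exists (Rmax (h b) M); intros a [<-|Ha]; [apply Rmax_l|].
  eapply Rle_trans; [apply HM, Ha|apply Rmax_r].
Qed.

Lemma list_pos_lower_bound {A : Type} (l : list A) (h : A -> R) :
  (forall a, 0 < h a) -> exists d, 0 < d /\ forall a, In a l -> d <= h a.
Proof.
  intros Hpos; induction l as [|b l [d [Hd Hdl]]]; [exists 1; split; [lra|intros a []]|].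
  exists (Rmin d (h b)); split; [apply Rmin_glb_lt; auto|].
  intros a [<-|Ha]; [apply Rmin_r|eapply Rle_trans; [apply Rmin_l|auto]].
Qed.

Lemma Rmax_lipschitz a b c d : Rabs (Rmax a b - Rmax c d) <= Rabs (a - c) + Rabs (b - d).
Proof. unfold Rmax, Rabs; destruct (Rle_dec a b), (Rle_dec c d); repeat destruct Rcase_abs; lra. Qed.

Lemma Rmin_lipschitz a b c d : Rabs (Rmin a b - Rmin c d) <= Rabs (a - c) + Rabs (b - d).
Proof. unfold Rmin, Rabs; destruct (Rle_dec a b), (Rle_dec c d); repeat destruct Rcase_abs; lra. Qed.

Section Continuity.

Context {X : Type} (tau : (X -> Prop) -> Prop).
Hypothesis Ht : is_topology tau.

Lemma continuous_R_affine (a b : R) (f : X -> R) :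
  continuous_R tau f -> continuous_R tau (fun x => a * f x + b).
Proof.
  intros Hf x eps Heps.
  destruct (Hf x (eps / (Rabs a + 1))) as [V [HV [HVx HVf]]].
  { apply Rdiv_lt_0_compat; [|pose proof (Rabs_pos a)]; lra. }
  exists V; repeat split; auto; intros y Hy.
  replace (a * f y + b - (a * f x + b)) with (a * (f y - f x)) by ring.
  rewrite Rabs_mult.
  assert (Hsmall : Rabs (f y - f x) * (Rabs a + 1) < eps).
  { specialize (HVf y Hy). pose proof (Rabs_pos a).
    apply (Rmult_lt_compat_r (Rabs a + 1)) in HVf; [|lra].
    unfold Rdiv in HVf; rewrite Rmult_assoc, Rinv_l in HVf; lra. }
  pose proof (Rabs_pos (f y - f x)); nra.
Qed.

Lemma continuous_R_lipschitz2 (phi : R -> R -> R) (f g : X -> R) :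
  (forall a b c d, Rabs (phi a b - phi c d) <= Rabs (a - c) + Rabs (b - d)) ->
  continuous_R tau f -> continuous_R tau g -> continuous_R tau (fun x => phi (f x) (g x)).
Proof.
  destruct Ht as [_ [Hinter _]]; intros Hphi Hf Hg x eps Heps.
  destruct (Hf x (eps / 2)) as [V [HV [HVx HVf]]]; [lra|].
  destruct (Hg x (eps / 2)) as [W [HW [HWx HWg]]]; [lra|].
  exists (fun y => V y /\ W y); split; [apply Hinter; auto|split; [auto|]].
  intros y [HVy HWy]; specialize (HVf y HVy); specialize (HWg y HWy).
  eapply Rle_lt_trans; [apply Hphi|lra].
Qed.

Lemma continuous_R_uniform_limit (F : X -> R) :
  (forall eps, 0 < eps ->
     exists G, continuous_R tau G /\ forall x, Rabs (F x - G x) < eps) ->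
  continuous_R tau F.
Proof.
  intros Happrox x eps Heps.
  destruct (Happrox (eps / 3)) as [G [HG HGF]]; [lra|].
  destruct (HG x (eps / 3)) as [V [HV [HVx HVG]]]; [lra|].
  exists V; repeat split; auto; intros y Hy.
  specialize (HVG y Hy); pose proof (HGF x) as Hx; pose proof (HGF y) as Hy'.
  replace (F y - F x) with ((F y - G y) + (G y - G x) - (F x - G x)) by ring.
  eapply Rle_lt_trans; [apply Rabs_triang|].
  rewrite Rabs_Ropp. eapply Rle_lt_trans; [apply Rplus_le_compat_r, Rabs_triang|lra].
Qed.

Lemma continuous_R_discrete (f : X -> R) :
  (forall x, tau (fun y => y = x)) -> continuous_R tau f.
Proof.
  intros Hd x eps Heps; exists (fun y => y = x); repeat split; auto.
  intros y ->; unfold Rminus; rewrite Rplus_opp_r, Rabs_R0; exact Heps.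
Qed.

Lemma continuous_R_near_list (x0 : X) (L : list (X -> R)) (r : R) :
  0 < r -> (forall a, In a L -> continuous_R tau a) ->
  exists V, tau V /\ V x0 /\ forall a y, In a L -> V y -> Rabs (a y - a x0) < r.
Proof.
  destruct Ht as [Htop [Hinter _]]; intros Hr.
  induction L as [|a L IH]; intros HL.
  - exists (fun _ => True); repeat split; auto; intros a y [].
  - destruct IH as [V [HV [HVx HVa]]]; [intros b Hb; apply HL; right; auto|].
    destruct (HL a (or_introl eq_refl) x0 r Hr) as [W [HW [HWx HWa]]].
    exists (fun y => V y /\ W y); split; [apply Hinter; auto|split; [auto|]].
    intros b y [<-|Hb] [HVy HWy]; auto.
Qed.

Fixpoint max_upto (phi : nat -> X -> R) (N : nat) (x : X) : R :=
  match N with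
  | O => phi O x
  | S n => Rmax (max_upto phi n x) (phi (S n) x)
  end.

Lemma max_upto_ge phi N x k : (k <= N)%nat -> phi k x <= max_upto phi N x.
Proof.
  induction N as [|N IH]; intros Hk; simpl.
  - inversion Hk; lra.
  - inversion Hk; subst; [apply Rmax_r|].
    eapply Rle_trans; [apply IH; auto|apply Rmax_l].
Qed.

Lemma max_upto_le phi N x M :
  (forall k, (k <= N)%nat -> phi k x <= M) -> max_upto phi N x <= M.
Proof.
  induction N as [|N IH]; intros H; simpl; [apply H; auto|].
  apply Rmax_lub; [apply IH; auto|apply H; auto].
Qed.

Lemma continuous_R_max_upto phi N :
  (forall k, continuous_R tau (phi k)) -> continuous_R tau (max_upto phi N).
Proof.
  intros Hphi; induction N as [|N IH]; simpl; auto.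
  exact (continuous_R_lipschitz2 Rmax _ _ Rmax_lipschitz IH (Hphi (S N))).
Qed.

(* The bound [phi k <= 1/(k+1)] makes the finite maxima converge uniformly. *)
Lemma continuous_R_sup (phi : nat -> X -> R) :
  (forall k, continuous_R tau (phi k)) ->
  (forall k x, 0 <= phi k x <= / (INR k + 1)) ->
  exists F, continuous_R tau F /\ (forall k x, phi k x <= F x) /\
    (forall x M, (forall k, phi k x <= M) -> F x <= M).
Proof.
  intros Hcont Hbd.
  assert (Hlub : forall x, exists m, is_lub (fun v => exists k, v = phi k x) m).
  { intros x; destruct (completeness (fun v => exists k, v = phi k x)) as [m Hm];
      [|exists (phi O x), O; auto|exists m; exact Hm].
    exists 1; intros v [k ->]; destruct (Hbd k x) as [_ Hk]; eapply Rle_trans; [apply Hk|].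
    rewrite <- Rinv_1; apply Rinv_le_contravar; [lra|pose proof (pos_INR k); lra]. }
  destruct (choice _ Hlub) as [F HF].
  assert (Hup : forall k x, phi k x <= F x) by (intros k x; apply (HF x); eauto).
  assert (Hleast : forall x M, (forall k, phi k x <= M) -> F x <= M)
    by (intros x M HM; apply (HF x); intros v [k ->]; auto).
  exists F; repeat split; auto.
  apply continuous_R_uniform_limit; intros eps Heps.
  destruct (archimed_cor1 (eps / 2)) as [N [HN HN0]]; [lra|].
  exists (max_upto phi N); split; [apply continuous_R_max_upto; auto|intros x].
  assert (Htail : forall k, (N < k)%nat -> phi k x < eps / 2).
  { intros k Hk; destruct (Hbd k x) as [_ Hk']; eapply Rle_lt_trans; [apply Hk'|].
    eapply Rle_lt_trans; [|apply HN]. apply Rinv_le_contravar; [apply lt_0_INR; auto|].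
    apply lt_INR in Hk; lra. }
  assert (Hbelow : max_upto phi N x <= F x) by (apply max_upto_le; auto).
  assert (Habove : F x <= max_upto phi N x + eps / 2).
  { apply Hleast; intros k; destruct (Nat.le_gt_cases k N) as [Hk|Hk].
    - pose proof (max_upto_ge phi N x k Hk); lra.
    - pose proof (Htail k Hk); pose proof (max_upto_ge phi N x O (Nat.le_0_l N));
        destruct (Hbd O x); lra. }
  rewrite Rabs_right; lra.
Qed.

End Continuity.

Section Tychonoff.

Context {X : Type} (tau : (X -> Prop) -> Prop).
Hypotheses (Ht : is_topology tau) (Hty : tychonoff tau).

Lemma open_ext (U V : X -> Prop) : (forall x, U x <-> V x) -> tau U -> tau V.
Proof.
  intros HUV HU; replace V with U; auto.
  apply functional_extensionality; intros x; apply propositional_extensionality; auto.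
Qed.

Lemma open_compl_point (y : X) : tau (fun x => x <> y).
Proof.
  destruct Ht as [_ [_ Hunion]].
  apply (open_ext (fun x => exists U, (tau U /\ ~ U y) /\ U x)).
  - intros x; split; [intros [U [[_ HUy] HUx]] ->; auto|].
    intros Hxy; destruct (proj1 Hty x y Hxy) as [U [HU [HUx HUy]]]; eauto.
  - apply Hunion; intros U [HU _]; auto.
Qed.

Lemma open_avoiding_list (x : X) (l : list X) :
  exists V, tau V /\ V x /\ forall z, In z l -> z <> x -> ~ V z.
Proof.
  destruct Ht as [Htop [Hinter _]].
  induction l as [|y l [V [HV [HVx HVl]]]]; [exists (fun _ => True); repeat split; auto|].
  destruct (classic (y = x)) as [->|Hyx].
  - exists V; repeat split; auto; intros z [<-|Hz] Hzx; [congruence|auto].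
  - exists (fun z => V z /\ z <> y); split; [apply Hinter; auto; apply open_compl_point|].
    split; [auto|]; intros z [<-|Hz] Hzx [HVz Hzy]; [congruence|exact (HVl z Hz Hzx HVz)].
Qed.

Lemma finite_discrete : finite_type X -> forall x, tau (fun y => y = x).
Proof.
  intros [l Hl] x; destruct (open_avoiding_list x l) as [V [HV [HVx HVl]]].
  apply (open_ext V); auto; intros y; split; [|intros ->; auto].
  intros HVy; apply NNPP; intros Hyx; exact (HVl y (Hl y) Hyx HVy).
Qed.

Lemma nonisolated_open (x0 : X) :
  ~ tau (fun y => y = x0) -> forall V, tau V -> V x0 -> exists y, y <> x0 /\ V y.
Proof.
  intros Hx0 V HV HVx; apply NNPP; intros Hnone; apply Hx0.
  apply (open_ext V); auto; intros y; split; [|intros ->; auto].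
  intros HVy; apply NNPP; intros Hyx; eauto.
Qed.

Lemma bump (x0 : X) (ys : list X) :
  exists phi : X -> R, continuous_R tau phi /\ phi x0 = 1 /\
    (forall y, In y ys -> y <> x0 -> phi y = 0) /\ (forall x, 0 <= phi x <= 1).
Proof.
  induction ys as [|y ys [phi [Hphi [Hphi0 [Hphiys Hphi01]]]]].
  - exists (fun _ => 1); repeat split; [apply continuous_R_const; auto|intros y []|lra|lra].
  - destruct (classic (y = x0)) as [->|Hyx].
    { exists phi; split; [|split; [|split]]; auto.
      intros z [<-|Hz] Hzx; [congruence|auto]. }
    destruct (proj2 Hty (fun z => z = y) x0) as [f [Hf [Hfx0 Hfy]]];
      [apply (open_ext (fun z => z <> y)); [tauto|apply open_compl_point]|congruence|].
    exists (fun x => Rmin (Rmax 0 (-1 * f x + 1)) (phi x)); repeat split.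
    + apply (continuous_R_lipschitz2 tau Ht Rmin); auto using Rmin_lipschitz.
      apply (continuous_R_lipschitz2 tau Ht Rmax); auto using Rmax_lipschitz.
      * apply continuous_R_const; auto.
      * apply continuous_R_affine; auto.
    + rewrite Hfx0, Hphi0; unfold Rmin, Rmax; repeat destruct Rle_dec; lra.
    + intros z Hz Hzx; specialize (Hphi01 z).
      destruct Hz as [<-|Hz]; [rewrite (Hfy y eq_refl)|rewrite (Hphiys z Hz Hzx)];
        unfold Rmin, Rmax; repeat destruct Rle_dec; lra.
    + specialize (Hphi01 x); unfold Rmin, Rmax; repeat destruct Rle_dec; lra.
    + specialize (Hphi01 x); unfold Rmin, Rmax; repeat destruct Rle_dec; lra.
Qed.

End Tychonoff.

Section Boundedness.

Context {T : Type} (add : T -> T -> T) (e : T).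

Lemma strictly_H_bounded_H_bounded tau : strictly_H_bounded add e tau -> H_bounded add e tau.
Proof. intros [sigma Hsigma] U HU; exists (fun n => sigma (history U n)); auto. Qed.

Lemma strictly_H_bounded_strictly_M_bounded tau :
  strictly_H_bounded add e tau -> strictly_M_bounded add e tau.
Proof.
  intros [sigma Hsigma]; exists sigma; intros U HU x.
  destruct (Hsigma U HU x) as [N HN]; exists N; auto.
Qed.

Lemma strictly_M_bounded_M_bounded tau : strictly_M_bounded add e tau -> M_bounded add e tau.
Proof. intros [sigma Hsigma] U HU; exists (fun n => sigma (history U n)); auto. Qed.

Lemma H_bounded_M_bounded tau : H_bounded add e tau -> M_bounded add e tau.
Proof.
  intros HH U HU; destruct (HH U HU) as [A HA]; exists A; intros x.
  destruct (HA x) as [N HN]; exists N; auto.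
Qed.

Lemma M_bounded_coarser (tau1 tau2 : (T -> Prop) -> Prop) :
  (forall U, tau1 U -> tau2 U) -> M_bounded add e tau2 -> M_bounded add e tau1.
Proof.
  intros Hsub HM U HU; apply HM; intros n.
  destruct (HU n) as [W [HW HWU]]; exists W; auto.
Qed.

End Boundedness.

Lemma sigma_compact_coarser {T : Type} (tau1 tau2 : (T -> Prop) -> Prop) :
  (forall U, tau1 U -> tau2 U) -> sigma_compact tau2 -> sigma_compact tau1.
Proof.
  intros Hsub [K [HK Hcover]]; exists K; split; auto.
  intros n C HC; apply HK; auto.
Qed.

Lemma compact_indexed_cover {T I : Type} (tau : (T -> Prop) -> Prop) (K : T -> Prop)
  (O : I -> T -> Prop) :
  compact_subset tau K -> (forall i, tau (O i)) -> (forall x, K x -> exists i, O i x) ->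
  exists is : list I, forall x, K x -> exists i, In i is /\ O i x.
Proof.
  intros HK HO Hcover.
  destruct (HK (fun U => exists i, U = O i)) as [L [HL HLcover]].
  - intros U [i ->]; auto.
  - intros x Hx; destruct (Hcover x Hx) as [i Hi]; eauto.
  - assert (Hidx : exists is, forall U, In U L -> exists i, In i is /\ U = O i).
    { clear HLcover; induction L as [|U L IH]; [exists nil; intros U []|].
      destruct IH as [is His]; [intros V HV; apply HL; right; auto|].
      destruct (HL U (or_introl eq_refl)) as [i ->].
      exists (i :: is); intros V [<-|HV]; [exists i; split; [left|]; auto|].
      destruct (His V HV) as [j [Hj ->]]; exists j; split; [right|]; auto. }
    destruct Hidx as [is His]; exists is; intros x Hx.
    destruct (HLcover x Hx) as [U [HU HUx]]; destruct (His U HU) as [i [Hi ->]]; eauto.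
Qed.

Lemma not_finite_injective_seq {X : Type} :
  ~ finite_type X -> exists xs : nat -> X, forall m n, xs m = xs n -> m = n.
Proof.
  intros Hinf.
  assert (Hfresh : forall l : list X, exists x, ~ In x l).
  { intros l; apply NNPP; intros Hno; apply Hinf; exists l; intros x.
    apply NNPP; intros Hx; eauto. }
  destruct (choice _ Hfresh) as [fresh Hfresh'].
  set (prefix := fix prefix n := match n with O => nil | S n => fresh (prefix n) :: prefix n end).
  assert (Hprefix : forall m n, (m < n)%nat -> In (fresh (prefix m)) (prefix n)).
  { intros m n; induction n as [|n IH]; intros Hmn; [lia|].
    simpl; destruct (Nat.eq_dec m n) as [->|Hne]; [left; auto|right; apply IH; lia]. }
  exists (fun n => fresh (prefix n)); intros m n Heq.
  destruct (Nat.lt_trichotomy m n) as [Hlt|[Heq'|Hlt]]; auto; exfalso.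
  - apply (Hfresh' (prefix n)); rewrite <- Heq; auto.
  - apply (Hfresh' (prefix m)); rewrite Heq; auto.
Qed.

Lemma injective_seq_interpolation {X : Type} (xs : nat -> X) (c : nat -> R) :
  (forall m n, xs m = xs n -> m = n) -> exists f : X -> R, forall n, f (xs n) = c n.
Proof.
  intros Hinj.
  assert (Hval : forall x, exists v, forall n, x = xs n -> v = c n).
  { intros x; destruct (classic (exists n, x = xs n)) as [[m ->]|Hnone].
    - exists (c m); intros n Hmn; rewrite (Hinj m n Hmn); auto.
    - exists 0; intros n ->; exfalso; eauto. }
  destruct (choice _ Hval) as [f Hf]; exists f; intros n; apply Hf; auto.
Qed.

Section FunctionSpace.

Context {X : Type} (tau : (X -> Prop) -> Prop).
Hypothesis Ht : is_topology tau.

Lemma CX_ext (f g : CX tau) : (forall x, cval f x = cval g x) -> f = g.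
Proof.
  destruct f as [f Hf], g as [g Hg]; unfold cval; simpl; intros Hfg.
  assert (f = g) as -> by (apply functional_extensionality; auto).
  f_equal; apply proof_irrelevance.
Qed.

Lemma Cu_open_Cm_open U : @Cu_top X tau U -> @Cm_top X tau U.
Proof.
  intros HU f Hf; destruct (HU f Hf) as [N [[eps [Heps HN]] HNU]].
  exists N; split; auto.
  exists (exist _ (fun _ => eps) (continuous_R_const eps Ht)); split; [intros; simpl; auto|].
  intros g; rewrite HN; simpl; tauto.
Qed.

Lemma Cp_open_Cm_open U : @Cp_top X tau U -> @Cm_top X tau U.
Proof.
  intros HU f Hf; destruct (HU f Hf) as [N [[F [eps [Heps HN]]] HNU]].
  exists (fun g => forall x, Rabs (cval g x - cval f x) < eps); split.
  - exists (exist _ (fun _ => eps) (continuous_R_const eps Ht)); split; [intros; simpl; auto|].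
    intros g; simpl; tauto.
  - intros g Hg; apply HNU, HN; auto.
Qed.

Lemma Cu_ball_nbhd (r : R) :
  0 < r -> nbhd (@Cu_top X tau) (czero Ht) (fun g => forall x, Rabs (cval g x) < r).
Proof.
  intros Hr; exists (fun g : CX tau => exists s, s < r /\ forall x, Rabs (cval g x) <= s).
  split; [|split].
  - intros f [s [Hs Hf]]; exists (fun g => forall x, Rabs (cval g x - cval f x) < (r - s) / 2).
    split; [exists ((r - s) / 2); split; [lra|tauto]|].
    intros g Hg; exists (s + (r - s) / 2); split; [lra|intros x].
    specialize (Hg x); specialize (Hf x).
    replace (cval g x) with ((cval g x - cval f x) + cval f x) by ring.
    eapply Rle_trans; [apply Rabs_triang|lra].
  - exists 0; split; auto; intros x; simpl; rewrite Rabs_R0; lra.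
  - intros g [s [Hs Hg]] x; specialize (Hg x); lra.
Qed.

Lemma Cp_open_eval (y : X) (P : R -> Prop) :
  (forall t, P t -> exists d, 0 < d /\ forall s, Rabs (s - t) < d -> P s) ->
  @Cp_top X tau (fun h => P (cval h y)).
Proof.
  intros HP h Hh; destruct (HP _ Hh) as [d [Hd Hs]].
  exists (fun g => forall x, In x (y :: nil) -> Rabs (cval g x - cval h x) < d); split.
  - exists (y :: nil), d; split; auto; tauto.
  - intros g Hg; apply Hs, Hg; left; auto.
Qed.

Lemma Cm_open_uniform_ball (l : list X) (U : CX tau -> Prop) (f : CX tau) :
  (forall x, In x l) -> @Cm_top X tau U -> U f ->
  exists d, 0 < d /\ forall g, (forall x, Rabs (cval g x - cval f x) < d) -> U g.
Proof.
  intros Hl HU Hf; destruct (HU f Hf) as [N [[eps [Heps HN]] HNU]].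
  destruct (list_pos_lower_bound l (cval eps) Heps) as [d [Hd Hdl]].
  exists d; split; auto; intros g Hg; apply HNU, HN; intros x.
  specialize (Hg x); specialize (Hdl x (Hl x)); lra.
Qed.

End FunctionSpace.

Section InfiniteSpace.

Context {X : Type} (tau : (X -> Prop) -> Prop).
Hypotheses (Ht : is_topology tau) (Hty : tychonoff tau).

Lemma cval_cadd (f g : CX tau) x : cval (cadd Ht f g) x = cval f x + cval g x.
Proof. reflexivity. Qed.

Lemma Cp_compact_eval_bounded (K : CX tau -> Prop) (y : X) :
  compact_subset (@Cp_top X tau) K -> exists M, forall h, K h -> Rabs (cval h y) < M.
Proof.
  intros HK.
  destruct (compact_indexed_cover _ K (fun (j : nat) h => Rabs (cval h y) < INR j) HK)
    as [js Hjs].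
  - intros j; apply (Cp_open_eval tau y (fun t => Rabs t < INR j)); intros t Htj.
    exists (INR j - Rabs t); split; [lra|intros s Hs].
    pose proof (Rabs_triang_inv s t); lra.
  - intros h _; destruct (INR_unbounded (Rabs (cval h y))) as [j Hj]; exists j; lra.
  - destruct (list_upper_bound js INR) as [M HM]; exists M; intros h Hh.
    destruct (Hjs h Hh) as [j [Hj Hhj]]; specialize (HM j Hj); lra.
Qed.

Lemma Cp_compact_near_point (K : CX tau -> Prop) (x0 : X) (c d : R) :
  ~ tau (fun y => y = x0) -> 0 < d -> compact_subset (@Cp_top X tau) K ->
  exists ys, forall h, K h ->
    cval h x0 < c \/ exists y, In y ys /\ y <> x0 /\ c - d < cval h y.
Proof.
  intros Hx0 Hd HK.
  set (O := fun (i : option X) (h : CX tau) => match i with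
    | None => cval h x0 < c
    | Some y => y <> x0 /\ c - d < cval h y end).
  destruct (compact_indexed_cover _ K O HK) as [is His].
  - intros [y|]; [apply (Cp_open_eval tau y (fun t => y <> x0 /\ c - d < t))
                 |apply (Cp_open_eval tau x0 (fun t => t < c))].
    + intros t [Hyx Ht']; exists (t - (c - d)); split; [lra|intros s Hs; split; auto].
      apply Rabs_def2 in Hs; lra.
    + intros t Ht'; exists (c - t); split; [lra|intros s Hs; apply Rabs_def2 in Hs; lra].
  - intros h _; destruct (Rlt_dec (cval h x0) c) as [Hlt|Hge]; [exists None; auto|].
    destruct (proj2_sig h x0 d Hd) as [V [HV [HVx HVh]]].
    destruct (nonisolated_open tau x0 Hx0 V HV HVx) as [y [Hyx HVy]].
    exists (Some y); split; auto; specialize (HVh y HVy); apply Rabs_def2 in HVh.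
    unfold cval in *; lra.
  - exists (map (fun i => match i with Some y => y | None => x0 end) is); intros h Hh.
    destruct (His h Hh) as [[y|] [Hi Hhi]]; [right|left; auto].
    exists y; split; [apply (in_map (fun i => match i with Some y => y | None => x0 end) _ _ Hi)|].
    exact Hhi.
Qed.

Lemma nonisolated_near_list (x0 : X) (L : list (CX tau)) (r : R) :
  ~ tau (fun y => y = x0) -> 0 < r ->
  exists y, y <> x0 /\ forall a, In a L -> Rabs (cval a y - cval a x0) < r.
Proof.
  intros Hx0 Hr.
  destruct (continuous_R_near_list tau Ht x0 (map cval L) r Hr) as [V [HV [HVx HVa]]].
  - intros a Ha; apply in_map_iff in Ha as [b [<- _]]; apply (proj2_sig b).
  - destruct (nonisolated_open tau x0 Hx0 V HV HVx) as [y [Hyx HVy]].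
    exists y; split; auto; intros a Ha; apply HVa; auto; apply in_map; auto.
Qed.

Lemma Cu_not_M_bounded_discrete :
  (forall x, tau (fun y => y = x)) -> ~ finite_type X ->
  ~ M_bounded (cadd Ht) (czero Ht) (@Cu_top X tau).
Proof.
  intros Hd Hinf HM; destruct (not_finite_injective_seq Hinf) as [xs Hinj].
  destruct (HM (fun _ g => forall x, Rabs (cval g x) < 1)) as [A HA];
    [intros _; apply Cu_ball_nbhd; lra|].
  destruct (choice _ (fun n => list_upper_bound (A n) (fun a => cval a (xs n)))) as [M HM'].
  destruct (injective_seq_interpolation xs (fun n => M n + 1) Hinj) as [f Hf].
  destruct (HA (exist _ f (continuous_R_discrete tau f Hd))) as [n [a [u [Ha [Hu Hfau]]]]].
  apply (f_equal (fun h => cval h (xs n))) in Hfau; rewrite cval_cadd in Hfau.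
  specialize (Hu (xs n)); apply Rabs_def2 in Hu; specialize (HM' n a Ha).
  unfold cval at 1 in Hfau; simpl in Hfau; rewrite Hf in Hfau; lra.
Qed.

Lemma Cp_not_sigma_compact_discrete :
  (forall x, tau (fun y => y = x)) -> ~ finite_type X -> ~ sigma_compact (@Cp_top X tau).
Proof.
  intros Hd Hinf [K [HK Hcover]]; destruct (not_finite_injective_seq Hinf) as [xs Hinj].
  destruct (choice _ (fun n => Cp_compact_eval_bounded (K n) (xs n) (HK n))) as [M HM].
  destruct (injective_seq_interpolation xs M Hinj) as [f Hf].
  destruct (Hcover (exist _ f (continuous_R_discrete tau f Hd))) as [n Hn].
  specialize (HM n _ Hn); unfold cval in HM; simpl in HM; rewrite Hf in HM.
  pose proof (Rle_abs (M n)); lra.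
Qed.

(* [F = sup_n psi_n / (n+1)] vanishes at [x0] and reaches [1/(n+1)] at [y n], where every
   function of [A n] nearly agrees with its value at [x0]; a uniform perturbation of size
   [1/(3(n+1))] cannot bridge that gap. *)
Lemma Cu_not_M_bounded_nonisolated (x0 : X) :
  ~ tau (fun y => y = x0) -> ~ M_bounded (cadd Ht) (czero Ht) (@Cu_top X tau).
Proof.
  intros Hx0 HM; set (r := fun n : nat => / (INR n + 1)).
  assert (Hr : forall n, 0 < r n)
    by (intros n; apply Rinv_0_lt_compat; pose proof (pos_INR n); lra).
  destruct (HM (fun n g => forall x, Rabs (cval g x) < r n / 3)) as [A HA];
    [intros n; apply Cu_ball_nbhd; pose proof (Hr n); lra|].
  destruct (choice _ (fun n => nonisolated_near_list x0 (A n) (r n / 3) Hx0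
    ltac:(pose proof (Hr n); lra))) as [y Hy].
  assert (Hbump : forall n, exists psi, continuous_R tau psi /\ psi (y n) = 1 /\
      psi x0 = 0 /\ forall x, 0 <= psi x <= 1).
  { intros n; destruct (bump tau Ht Hty (y n) (x0 :: nil)) as [psi [Hc [H1 [H0 H01]]]].
    exists psi; split; [|split; [|split]]; auto.
    apply H0; [left; auto|intros E; apply (proj1 (Hy n)); auto]. }
  destruct (choice _ Hbump) as [psi Hpsi].
  destruct (continuous_R_sup tau Ht (fun n x => r n * psi n x + 0)) as [F [HF [HFup HFleast]]].
  - intros n; apply continuous_R_affine, Hpsi.
  - intros n x; destruct (Hpsi n) as [_ [_ [_ H01]]]; specialize (H01 x); pose proof (Hr n).
    fold (r n); split; nra.
  - destruct (HA (exist _ F HF)) as [n [a [u [Ha [Hu HFau]]]]].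
    assert (HFx : forall x, F x = cval a x + cval u x)
      by (intros x; apply (f_equal (fun h => cval h x)) in HFau; exact HFau).
    assert (HFx0 : F x0 <= 0).
    { apply HFleast; intros k; rewrite (proj1 (proj2 (proj2 (Hpsi k)))); lra. }
    assert (HFy : r n <= F (y n)).
    { pose proof (HFup n (y n)) as H; rewrite (proj1 (proj2 (Hpsi n))) in H; lra. }
    pose proof (HFx x0); pose proof (HFx (y n)); pose proof (proj2 (Hy n) a Ha) as Ha'.
    pose proof (Hu x0) as Hu0; pose proof (Hu (y n)) as Huy.
    apply Rabs_def2 in Ha', Hu0, Huy; lra.
Qed.

(* [K n] is covered by finitely many sets "[h x0 < 1]" and "[h y > 1 - r n / 2]" with
   [y <> x0]; [u = 1 - sup_n r n (1 - phi n)] equals [1] at [x0] and is at most [1 - r n] at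
   those [y], so it lies in no [K n]. *)
Lemma Cp_not_sigma_compact_nonisolated (x0 : X) :
  ~ tau (fun y => y = x0) -> ~ sigma_compact (@Cp_top X tau).
Proof.
  intros Hx0 [K [HK Hcover]]; set (r := fun n : nat => / (INR n + 1)).
  assert (Hr : forall n, 0 < r n)
    by (intros n; apply Rinv_0_lt_compat; pose proof (pos_INR n); lra).
  destruct (choice _ (fun n => Cp_compact_near_point (K n) x0 1 (r n / 2) Hx0
    ltac:(pose proof (Hr n); lra) (HK n))) as [ys Hys].
  destruct (choice _ (fun n => bump tau Ht Hty x0 (ys n))) as [phi Hphi].
  destruct (continuous_R_sup tau Ht (fun n x => - r n * phi n x + r n)) as [F [HF [HFup HFleast]]].
  - intros n; apply continuous_R_affine, Hphi.
  - intros n x; destruct (Hphi n) as [_ [_ [_ H01]]]; specialize (H01 x); pose proof (Hr n).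
    fold (r n); split; nra.
  - destruct (Hcover (exist _ _ (continuous_R_affine tau (-1) 1 F HF))) as [n Hn].
    destruct (Hys n _ Hn) as [Hlt|[y [Hy [Hyx Hgt]]]]; unfold cval in *; simpl in *.
    + assert (F x0 <= 0); [|lra].
      apply HFleast; intros k; rewrite (proj1 (proj2 (Hphi k))); lra.
    + pose proof (HFup n y) as H; rewrite (proj1 (proj2 (proj2 (Hphi n))) y Hy Hyx) in H.
      pose proof (Hr n); lra.
Qed.

Lemma Cu_M_bounded_finite :
  M_bounded (cadd Ht) (czero Ht) (@Cu_top X tau) -> finite_type X.
Proof.
  intros HM; apply NNPP; intros Hinf.
  destruct (classic (forall x, tau (fun y => y = x))) as [Hd|Hnd].
  - exact (Cu_not_M_bounded_discrete Hd Hinf HM).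
  - apply not_all_ex_not in Hnd as [x0 Hx0]; exact (Cu_not_M_bounded_nonisolated x0 Hx0 HM).
Qed.

Lemma Cp_sigma_compact_finite : sigma_compact (@Cp_top X tau) -> finite_type X.
Proof.
  intros HS; apply NNPP; intros Hinf.
  destruct (classic (forall x, tau (fun y => y = x))) as [Hd|Hnd].
  - exact (Cp_not_sigma_compact_discrete Hd Hinf HS).
  - apply not_all_ex_not in Hnd as [x0 Hx0]; exact (Cp_not_sigma_compact_nonisolated x0 Hx0 HS).
Qed.

End InfiniteSpace.

Lemma interval_net (a d : R) (m : nat) : 0 < d ->
  exists V : list R, forall t, a <= t <= a + INR m * d -> exists v, In v V /\ Rabs (t - v) < d.
Proof.
  intros Hd; induction m as [|m [V HV]].
  - exists (a :: nil); intros t Ht; exists a; split; [left; auto|].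
    simpl in Ht; replace (t - a) with 0 by lra; rewrite Rabs_R0; auto.
  - exists ((a + INR (S m) * d) :: V); intros t Ht.
    destruct (Rle_dec t (a + INR m * d)) as [Hle|Hgt].
    + destruct (HV t) as [v [Hv Htv]]; [lra|exists v; split; [right|]; auto].
    + exists (a + INR (S m) * d); split; [left; auto|].
      rewrite S_INR in *; apply Rabs_def1; lra.
Qed.

Lemma real_net (n d : R) : 0 < d ->
  exists V : list R, forall t, Rabs t <= n -> exists v, In v V /\ Rabs (t - v) < d.
Proof.
  intros Hd; destruct (INR_archimed d (2 * n) Hd) as [m Hm].
  destruct (interval_net (- n) d m Hd) as [V HV]; exists V; intros t Ht.
  apply HV; revert Ht; unfold Rabs; destruct Rcase_abs; intros; lra.
Qed.

Definition fupdate {X : Type} (g : X -> R) (y : X) (v : R) : X -> R :=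
  fun x => if excluded_middle_informative (x = y) then v else g x.

Lemma function_net {X : Type} (n d : R) (ys : list X) : 0 < d ->
  exists G : list (X -> R), forall h : X -> R, (forall x, Rabs (h x) <= n) ->
    exists g, In g G /\ forall x, In x ys -> Rabs (h x - g x) < d.
Proof.
  intros Hd; destruct (real_net n d Hd) as [V HV].
  induction ys as [|y ys [G HG]].
  - exists ((fun _ => 0) :: nil); intros h _; exists (fun _ => 0); split; [left|intros x []]; auto.
  - exists (flat_map (fun g => map (fupdate g y) V) G); intros h Hh.
    destruct (HG h Hh) as [g [Hg Hgh]]; destruct (HV (h y) (Hh y)) as [v [Hv Hvy]].
    exists (fupdate g y v); split; [apply in_flat_map; exists g; split; auto; apply in_map; auto|].
    intros x Hx; unfold fupdate; destruct excluded_middle_informative as [->|Hne]; auto.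
    destruct Hx as [<-|Hx]; [congruence|auto].
Qed.

Lemma history_length {T : Type} (U : nat -> T -> Prop) n : length (history U n) = S n.
Proof. unfold history; rewrite length_map, length_seq; auto. Qed.

Lemma history_last {T : Type} (U : nat -> T -> Prop) n d : last (history U n) d = U n.
Proof. unfold history; rewrite seq_S, map_app; apply last_last. Qed.

Lemma nested_intervals (lo hi : nat -> R) :
  (forall k, lo k <= lo (S k)) -> (forall k, hi (S k) <= hi k) -> (forall k, lo k <= hi k) ->
  exists p, forall k, lo k <= p <= hi k.
Proof.
  intros Hlo Hhi Hlohi.
  assert (Hmono : forall k j, (k <= j)%nat -> lo k <= lo j /\ hi j <= hi k).
  { intros k j Hkj; induction Hkj as [|j Hkj [IHlo IHhi]]; [lra|].
    specialize (Hlo j); specialize (Hhi j); lra. }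
  assert (Hcross : forall k j, lo k <= hi j).
  { intros k j; destruct (Hmono k (Nat.max k j) (Nat.le_max_l k j)).
    destruct (Hmono j (Nat.max k j) (Nat.le_max_r k j)); specialize (Hlohi (Nat.max k j)); lra. }
  destruct (completeness (fun v => exists k, v = lo k)) as [p [Hub Hleast]].
  - exists (hi O); intros v [k ->]; auto.
  - exists (lo O), O; auto.
  - exists p; intros k; split; [apply Hub; eauto|apply Hleast; intros v [j ->]; auto].
Qed.

Section Boxes.

Context {X : Type} {tau : (X -> Prop) -> Prop}.

Definition box (lo hi : X -> R) (f : CX tau) : Prop := forall x, lo x <= cval f x <= hi x.

Definition finitely_covered (C : (CX tau -> Prop) -> Prop) (B : CX tau -> Prop) : Prop :=
  exists L, (forall U, In U L -> C U) /\ forall f, B f -> exists U, In U L /\ U f.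

Lemma box_split (C : (CX tau -> Prop) -> Prop) (lo hi : X -> R) (y : X) :
  let m := (lo y + hi y) / 2 in
  ~ finitely_covered C (box lo hi) ->
  ~ finitely_covered C (box lo (fupdate hi y m)) \/
  ~ finitely_covered C (box (fupdate lo y m) hi).
Proof.
  intros m Hno; apply NNPP; intros Hboth; apply Hno.
  apply not_or_and in Hboth as [H1 H2]; apply NNPP in H1, H2.
  destruct H1 as [L1 [HL1 Hcov1]], H2 as [L2 [HL2 Hcov2]].
  exists (L1 ++ L2); split; [intros U HU; apply in_app_or in HU as [HU|HU]; auto|].
  intros f Hf; destruct (Rle_dec (cval f y) m) as [Hle|Hgt].
  - destruct (Hcov1 f) as [U [HU HUf]]; [|exists U; split; [apply in_or_app|]; auto].
    intros x; unfold fupdate; destruct excluded_middle_informative as [->|]; auto.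
    split; [apply Hf|auto].
  - destruct (Hcov2 f) as [U [HU HUf]]; [|exists U; split; [apply in_or_app|]; auto].
    intros x; unfold fupdate; destruct excluded_middle_informative as [->|]; auto.
    split; [lra|apply Hf].
Qed.

Lemma box_halve (C : (CX tau -> Prop) -> Prop) (ys : list X) :
  forall lo hi, (forall x, lo x <= hi x) -> ~ finitely_covered C (box lo hi) ->
  exists lo' hi', (forall x, lo' x <= hi' x) /\ ~ finitely_covered C (box lo' hi') /\
    forall x, lo x <= lo' x /\ hi' x <= hi x /\
      (In x ys -> hi' x - lo' x <= (hi x - lo x) / 2).
Proof.
  induction ys as [|y ys IH]; intros lo hi Hlohi Hno.
  { exists lo, hi; repeat split; auto; [lra|lra|intros []]. }
  assert (Hstep : exists lo1 hi1, (forall x, lo1 x <= hi1 x) /\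
      ~ finitely_covered C (box lo1 hi1) /\ forall x,
      lo x <= lo1 x /\ hi1 x <= hi x /\ (x = y -> hi1 x - lo1 x <= (hi x - lo x) / 2)).
  { set (m := (lo y + hi y) / 2).
    destruct (box_split C lo hi y Hno) as [Hlow|Hhigh];
      [exists lo, (fupdate hi y m)|exists (fupdate lo y m), hi]; (split; [|split; [auto|]]);
      intros x; pose proof (Hlohi y); specialize (Hlohi x); unfold fupdate, m;
      destruct excluded_middle_informative as [->|Hne]; repeat split; intros; try lra; congruence. }
  destruct Hstep as [lo1 [hi1 [Hlohi1 [Hno1 Hstep]]]].
  destruct (IH lo1 hi1 Hlohi1 Hno1) as [lo' [hi' [Hlohi' [Hno' Hrest]]]].
  exists lo', hi'; split; [auto|split; [auto|intros x]].
  destruct (Hstep x) as [A1 [A2 A3]]; destruct (Hrest x) as [B1 [B2 B3]].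
  split; [lra|split; [lra|]]; intros [<-|Hx]; [|specialize (B3 Hx); lra].
  specialize (A3 eq_refl); specialize (Hlohi' y); specialize (Hlohi1 y).
  destruct (classic (In y ys)) as [Hy|Hy]; [specialize (B3 Hy)|]; lra.
Qed.

Lemma uncovered_box_sequence (C : (CX tau -> Prop) -> Prop) (ys : list X) (lo hi : X -> R) :
  (forall x, lo x <= hi x) -> ~ finitely_covered C (box lo hi) ->
  exists lo' hi' : nat -> X -> R, lo' O = lo /\ hi' O = hi /\
    (forall k, ~ finitely_covered C (box (lo' k) (hi' k))) /\
    (forall k x, lo' k x <= lo' (S k) x /\ hi' (S k) x <= hi' k x /\ lo' k x <= hi' k x) /\
    (forall k x, In x ys -> hi' k x - lo' k x <= (hi x - lo x) * (/ 2) ^ k).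
Proof.
  intros Hlohi Hno.
  set (good := fun b : (X -> R) * (X -> R) =>
    (forall x, fst b x <= snd b x) /\ ~ finitely_covered C (box (fst b) (snd b))).
  assert (Hstep : forall b, exists b', good b -> good b' /\ forall x,
      fst b x <= fst b' x /\ snd b' x <= snd b x /\
      (In x ys -> snd b' x - fst b' x <= (snd b x - fst b x) / 2)).
  { intros b; destruct (classic (good b)) as [[Hb Hbno]|Hb]; [|exists b; tauto].
    destruct (box_halve C ys (fst b) (snd b) Hb Hbno) as [lo' [hi' [H1 [H2 H3]]]].
    exists (lo', hi'); intros _; split; [split|]; auto. }
  destruct (choice _ Hstep) as [step Hstep'].
  set (s := fix s k := match k with O => (lo, hi) | S k => step (s k) end).
  assert (Hgood : forall k, good (s k))
    by (induction k as [|k IH]; [split; auto|apply (Hstep' (s k) IH)]).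
  exists (fun k => fst (s k)), (fun k => snd (s k)).
  split; [auto|split; [auto|split; [|split]]].
  - intros k; apply Hgood.
  - intros k x; destruct (Hstep' (s k) (Hgood k)) as [_ Hx]; specialize (Hx x).
    pose proof (proj1 (Hgood k) x); simpl; lra.
  - intros k x Hx; induction k as [|k IH]; [simpl; lra|].
    destruct (proj2 (Hstep' (s k) (Hgood k)) x) as [_ [_ Hhalf]]; specialize (Hhalf Hx).
    change (s (S k)) with (step (s k)); simpl pow; lra.
Qed.

End Boxes.

Section FiniteSpace.

Context {X : Type} (tau : (X -> Prop) -> Prop).
Hypotheses (Ht : is_topology tau) (Hty : tychonoff tau).
Variable l : list X.
Hypothesis Hl : forall x, In x l.

Definition of_fun (h : X -> R) : CX tau :=
  exist _ h (continuous_R_discrete tau h (finite_discrete tau Ht Hty (ex_intro _ l Hl))).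

Lemma finite_bounded (h : X -> R) : exists B : nat, forall x, Rabs (h x) <= INR B.
Proof.
  destruct (list_upper_bound l (fun x => Rabs (h x))) as [M HM].
  destruct (INR_unbounded M) as [B HB]; exists B; intros x; specialize (HM x (Hl x)); lra.
Qed.

Lemma Cm_box_net (n d : R) : 0 < d ->
  exists A : list (CX tau), forall g : CX tau, (forall x, Rabs (cval g x) <= n) ->
    exists a, In a A /\ forall x, Rabs (cval g x - cval a x) < d.
Proof.
  intros Hd; destruct (function_net n d l Hd) as [G HG]; exists (map of_fun G); intros g Hg.
  destruct (HG (cval g) Hg) as [h [Hh Hgh]].
  exists (of_fun h); split; [apply in_map; auto|intros x; apply Hgh, Hl].
Qed.

(* TWO answers [U n] with a net of the box of radius [n + 1] finer than a uniform ball
   inside [U n]; every [g] lies in all these boxes from some round on. *)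
Lemma Cm_strictly_H_bounded : strictly_H_bounded (cadd Ht) (czero Ht) (@Cm_top X tau).
Proof.
  assert (Hradius : forall U, exists d, nbhd (@Cm_top X tau) (czero Ht) U ->
      0 < d /\ forall g : CX tau, (forall x, Rabs (cval g x) < d) -> U g).
  { intros U; destruct (classic (nbhd (@Cm_top X tau) (czero Ht) U))
      as [[W [HW [HW0 HWU]]]|Hno]; [|exists 1; tauto].
    destruct (Cm_open_uniform_ball tau l W _ Hl HW HW0) as [d [Hd Hball]].
    exists d; intros _; split; auto; intros g Hg; apply HWU, Hball; intros x.
    unfold cval at 2; simpl; rewrite Rminus_0_r; auto. }
  destruct (choice _ Hradius) as [radius Hradius'].
  assert (Hnets : forall p : nat * R, exists A : list (CX tau), 0 < snd p -> forall g : CX tau,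
      (forall x, Rabs (cval g x) <= INR (fst p)) ->
      exists a, In a A /\ forall x, Rabs (cval g x - cval a x) < snd p).
  { intros [n d]; destruct (Rlt_dec 0 d) as [Hd|Hd]; [|exists nil; simpl; tauto].
    destruct (Cm_box_net (INR n) d Hd) as [A HA]; exists A; auto. }
  destruct (choice _ Hnets) as [net Hnet].
  exists (fun hst => net (length hst, radius (last hst (fun _ => True)))).
  intros U HU g; destruct (finite_bounded (cval g)) as [B HB]; exists B; intros n Hn.
  rewrite history_length, history_last.
  destruct (Hradius' (U n) (HU n)) as [Hd Hball].
  destruct (Hnet (S n, radius (U n)) Hd g) as [a [Ha Hga]].
  { intros x; eapply Rle_trans; [apply HB|apply le_INR; simpl; lia]. }
  exists a, (of_fun (fun x => cval g x - cval a x)); split; [auto|split].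
  - apply Hball; apply Hga.
  - apply CX_ext; intros x; rewrite cval_cadd; unfold of_fun, cval; simpl; ring.
Qed.

(* Bisection: an uncovered box contains a nested sequence of uncovered boxes of vanishing
   width, and the neighbourhood in the cover of their common point swallows one of them. *)
Lemma box_compact (a : R) : 0 <= a ->
  compact_subset (@Cm_top X tau) (box (fun _ => - a) (fun _ => a)).
Proof.
  intros Ha C HC Hcover; apply NNPP; intros Hno.
  destruct (uncovered_box_sequence C l (fun _ => - a) (fun _ => a))
    as [lo [hi [Hlo0 [Hhi0 [Hbad [Hnest Hwidth]]]]]]; [intros; lra|exact Hno|].
  assert (Hpoint : forall x, exists p, forall k, lo k x <= p <= hi k x)
    by (intros x; apply nested_intervals; intros k; apply Hnest).
  destruct (choice _ Hpoint) as [p Hp].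
  destruct (Hcover (of_fun p)) as [U [HCU HUp]].
  { intros x; pose proof (Hp x O) as Hx; rewrite Hlo0, Hhi0 in Hx; exact Hx. }
  destruct (Cm_open_uniform_ball tau l U (of_fun p) Hl (HC U HCU) HUp) as [d [Hd Hball]].
  destruct (pow_lt_1_zero (/ 2) ltac:(rewrite Rabs_right; lra) (d / (2 * a + 1)))
    as [k Hk]; [apply Rdiv_lt_0_compat; lra|].
  specialize (Hk k (le_n k)).
  assert (Hq : 0 < (/ 2) ^ k) by (apply pow_lt; lra).
  rewrite Rabs_right in Hk by lra.
  assert (Hsmall : (a - - a) * (/ 2) ^ k < d).
  { apply (Rmult_lt_compat_r (2 * a + 1)) in Hk; [|lra].
    unfold Rdiv in Hk; rewrite Rmult_assoc, Rinv_l, Rmult_1_r in Hk by lra; nra. }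
  apply (Hbad k); exists (U :: nil); split; [intros V [<-|[]]; auto|].
  intros f Hf; exists U; split; [left; auto|]; apply Hball; intros x.
  specialize (Hf x); specialize (Hp x k); specialize (Hwidth k x (Hl x)).
  unfold of_fun, cval at 2; simpl; apply Rabs_def1; lra.
Qed.

Lemma Cm_sigma_compact : sigma_compact (@Cm_top X tau).
Proof.
  exists (fun n => box (fun _ => - INR n) (fun _ => INR n)).
  split; [intros n; apply box_compact, pos_INR|].
  intros f; destruct (finite_bounded (cval f)) as [B HB]; exists B; intros x.
  specialize (HB x); pose proof (Rle_abs (cval f x)); pose proof (Rle_abs (- cval f x)).
  rewrite Rabs_Ropp in *; lra.
Qed.

End FiniteSpace.

Theorem theorem2p8 (X : Type) (tau : (X -> Prop) -> Prop)
  (Ht : is_topology tau) (Hty : tychonoff tau) :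
  let Cm := @Cm_top X tau in
  let Cu := @Cu_top X tau in
  let Cp := @Cp_top X tau in
  let add := cadd Ht in
  let e := czero Ht in
  (sigma_compact Cm <-> finite_type X) /\
  (strictly_H_bounded add e Cm <-> finite_type X) /\
  (H_bounded add e Cm <-> finite_type X) /\
  (strictly_M_bounded add e Cm <-> finite_type X) /\
  (M_bounded add e Cm <-> finite_type X) /\
  (M_bounded add e Cu <-> finite_type X) /\
  (sigma_compact Cp <-> finite_type X).
Proof.
  cbv zeta.
  assert (finite_type X -> strictly_H_bounded (cadd Ht) (czero Ht) (@Cm_top X tau))
    by (intros [l Hl]; exact (Cm_strictly_H_bounded tau Ht Hty l Hl)).
  assert (finite_type X -> sigma_compact (@Cm_top X tau))
    by (intros [l Hl]; exact (Cm_sigma_compact tau Ht Hty l Hl)).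
  pose proof (Cu_M_bounded_finite tau Ht Hty).
  pose proof (Cp_sigma_compact_finite tau Ht Hty).
  pose proof (M_bounded_coarser (cadd Ht) (czero Ht) _ _ (Cu_open_Cm_open tau Ht)).
  pose proof (sigma_compact_coarser _ _ (Cp_open_Cm_open tau Ht)).
  pose proof (strictly_H_bounded_H_bounded (cadd Ht) (czero Ht) (@Cm_top X tau)).
  pose proof (strictly_H_bounded_strictly_M_bounded (cadd Ht) (czero Ht) (@Cm_top X tau)).
  pose proof (strictly_M_bounded_M_bounded (cadd Ht) (czero Ht) (@Cm_top X tau)).
  pose proof (H_bounded_M_bounded (cadd Ht) (czero Ht) (@Cm_top X tau)).
  tauto.
Qed.
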